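(* If $(X,x_0)$ is a pointed epitopological space then $\Omega^{\mathrm{ps}}(X,x_0)=\Omega^{\mathrm{epi}}(X,x_0)$ (same set and same pseudotopological structure). If $(X',x_0')$ is a pointed topological space then $\Omega^{\mathrm{epi}}(X',x_0')=\Omega^{\mathrm{top}}(X',x_0')$.
   Context: For a set $X$, $U(X)$ is the set of ultrafilters on $X$, $\dot x$ the principal ultrafilter at $x$; $f_*\mathscr F=\{S:f^{-1}(S)\in\mathscr F\}$. A pseudotopological space is a set $X$ with $u\subset U(X)\times X$ containing all $(\dot x,x)$; write $\mathscr U\to x$; for a filter, $\mathscr F\to x$ means every finer ultrafilter converges to $x$. Continuous maps: $\mathscr U\to x\Rightarrow f_*\mathscr U\to f(x)$. Subspaces carry the initial structure w.r.t. the inclusion. Topological spaces are regarded as pseudotopological via ultrafilter convergence. For pseudotopological $X,Y$, $Y^X$ denotes the set of continuous maps $X\to Y$ with the pseudotopology: a filter $\mathscr F\to f$ iff for every filter $\mathscr G\to x$ in $X$, $\mathrm{ev}_*(\mathscr F\times\mathscr G)\to f(x)$. A pseudotopological space is epitopological if its structure is initial w.r.t. some family of maps $X\to Z_j^{Y_j}$, $Y_j,Z_j$ topological; the full subcategory $\mathsf{EpiTop}$ of such spaces is cartesian closed. $\Omega^{\mathrm{ps}}(X,x_0)$ is the set of loops $l\colon[0,1]\to X$ with $l(0)=l(1)=x_0$ with the subspace pseudotopology of $X^{[0,1]}$. For an epitopological space, $\Omega^{\mathrm{epi}}(X,x_0)$ is the same set with the subspace structure (initial structure in $\mathsf{EpiTop}$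 w.r.t. the inclusion) of the exponential object $X^{[0,1]}$ of the cartesian closed category $\mathsf{EpiTop}$. For a topological space, $\Omega^{\mathrm{top}}(X,x_0)$ is the set of based loops with the subspace topology of the compact-open topology, regarded as a pseudotopological space. *)

From HB Require Import structures.
From mathcomp Require Import all_boot all_order all_algebra.
From mathcomp Require Import all_classical all_reals all_analysis.
From mathcomp Require Import Rstruct Rstruct_topology.

Unset Printing Implicit Defensive.
Import Order.TTheory GRing.Theory Num.Theory.
Local Open Scope classical_set_scope.
Local Open Scope ring_scope.

(** A space is a carrier set [car] inside an ambient type [pt], together with a
    relation [cv U x] ("U --> x") between ultrafilters U on the carrier and
    points x of the carrier.  An ultrafilter on the carrier [car] is encoded,
    as usual, as an ultrafilter on [pt] containing [car]; the values of [cv]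
    outside (ultrafilters on car) x car are irrelevant. *)
Record pspace := PSpace {
  pt : Type;
  car : set pt;
  cv : set_system pt -> pt -> Prop }.

Definition ultra_on (X : pspace) (U : set_system (pt X)) : Prop :=
  UltraFilter U /\ U (car X).

Definition is_pseudotop (X : pspace) : Prop :=
  forall x, car X x -> cv X (principal_filter x) x.

Definition fcv (X : pspace) (F : set_system (pt X)) (x : pt X) : Prop :=
  forall U, ultra_on X U -> F `<=` U -> cv X U x.

Definition ps_cont (X Y : pspace) (f : pt X -> pt Y) : Prop :=
  (forall x, car X x -> car Y (f x)) /\
  (forall U x, ultra_on X U -> car X x -> cv X U x -> cv Y (f @ U) (f x)).

Definition same_cv (T : Type) (S : set T) (c1 c2 : set_system T -> T -> Prop)
    : Prop :=
  forall U x, UltraFilter U -> U S -> S x -> (c1 U x <-> c2 U x).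

Definition top_ps (T : topologicalType) : pspace :=
  @PSpace T setT (fun U x => U --> x).

Definition ev (A B : Type) (p : (A -> B) * A) : B := p.1 p.2.

Definition ps_exp (X Y : pspace) : pspace :=
  @PSpace (pt X -> pt Y) (ps_cont X Y)
    (fun F f => forall (G : set_system (pt X)) (x : pt X),
       ProperFilter G -> G (car X) -> car X x -> fcv X G x ->
       fcv Y (@ev (pt X) (pt Y) @ filter_prod F G) (f x)).

Definition is_initial (X : pspace) (J : Type) (Z : J -> pspace)
    (f : forall j, pt X -> pt (Z j)) : Prop :=
  (forall j x, car X x -> car (Z j) (f j x)) /\
  forall U x, ultra_on X U -> car X x ->
    (cv X U x <-> forall j, cv (Z j) (f j @ U) (f j x)).

Definition epitop (X : pspace) : Prop :=
  exists (J : Type) (Y Z : J -> topologicalType)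
         (f : forall j, pt X -> (Y j -> Z j)),
    @is_initial X J (fun j => ps_exp (top_ps (Y j)) (top_ps (Z j))) f.

Definition ps_prod (X Y : pspace) : pspace :=
  @PSpace (pt X * pt Y) (car X `*` car Y)
    (fun U p => cv X (fst @ U) p.1 /\ cv Y (snd @ U) p.2).

(** The exponential object Y^X of the cartesian closed category EpiTop, with
    underlying set C(X,Y) and counit the evaluation map, is characterised by
    its universal property: [e] (a structure on C(X,Y)) is epitopological,
    ev : e x X -> Y is continuous, and for every epitopological Z and every
    continuous g : Z x X -> Y the transpose z |-> g(z, -) is continuous
    Z -> e.  (Such a transpose is automatically unique.) *)
Definition is_epi_exp (X Y : pspace) (e : set_system (pt X -> pt Y) -> (pt X -> pt Y) -> Prop)
    : Prop :=
  let E := @PSpace (pt X -> pt Y) (ps_cont X Y) e in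
  epitop E /\
  ps_cont (ps_prod E X) Y (@ev (pt X) (pt Y)) /\
  forall Z : pspace, epitop Z ->
    forall g : pt Z * pt X -> pt Y, ps_cont (ps_prod Z X) Y g ->
      ps_cont Z E (fun z x => g (z, x)).

(** The initial structure in EpiTop w.r.t. the inclusion of a subset [S] of
    the carrier of [E] (universal property of a subobject in EpiTop). *)
Definition is_epi_sub (E : pspace) (S : set (pt E))
    (s : set_system (pt E) -> pt E -> Prop) : Prop :=
  let Sub := @PSpace (pt E) S s in
  S `<=` car E /\
  epitop Sub /\
  ps_cont Sub E id /\
  forall Z : pspace, epitop Z -> forall g : pt Z -> pt E,
    (forall z, car Z z -> S (g z)) -> ps_cont Z E g -> ps_cont Z Sub g.

Definition unit_interval : set Rdefinitions.R := `[0%R, 1%R].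
Definition I01 : Type := set_type unit_interval.

Lemma in_unit_interval0 : (0%R : Rdefinitions.R) \in unit_interval.
Proof. by apply/mem_set; rewrite /unit_interval /= in_itv /= lexx ler01. Qed.
Lemma in_unit_interval1 : (1%R : Rdefinitions.R) \in unit_interval.
Proof. by apply/mem_set; rewrite /unit_interval /= in_itv /= lexx ler01. Qed.

Definition I0 : I01 := exist _ 0%R in_unit_interval0.
Definition I1 : I01 := exist _ 1%R in_unit_interval1.

Definition Ips : pspace := top_ps I01.

Definition full_ps (T : Type) (c : set_system T -> T -> Prop) : pspace :=
  @PSpace T setT c.

Definition ps_loops (X : pspace) (x0 : pt X) : set (I01 -> pt X) :=
  [set l | ps_cont Ips X l /\ l I0 = x0 /\ l I1 = x0].

(** Omega^ps(X, x0): subspace (initial structure in PsTop w.r.t. the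
    inclusion) of the exponential X^[0,1] *)
Definition Omega_ps (X : pspace) (x0 : pt X) : pspace :=
  @PSpace (I01 -> pt X) (ps_loops X x0) (cv (ps_exp Ips X)).

Definition epi_exp_I (X : pspace)
    (e : set_system (I01 -> pt X) -> (I01 -> pt X) -> Prop) : pspace :=
  @PSpace (I01 -> pt X) (ps_cont Ips X) e.

(** Omega^epi(X, x0) is the set [ps_loops X x0] with a structure [s] such that
    [is_epi_sub (epi_exp_I X e) (ps_loops X x0) s], where [is_epi_exp Ips X e]. *)

(** Omega^top(X', x0'): based (topologically) continuous loops with the
    subspace topology of the compact-open topology, regarded as a
    pseudotopological space (ultrafilter convergence in the subspace is
    convergence in the ambient compact-open space). *)
Definition top_loops (X : topologicalType) (x0 : X) : set (I01 -> X) :=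
  [set l | continuous l /\ l I0 = x0 /\ l I1 = x0].

Definition Omega_top (X : topologicalType) (x0 : X) : pspace :=
  @PSpace (I01 -> X) (top_loops X x0)
    (fun U l => (U : set_system (@compact_open I01 X)) --> (l : @compact_open I01 X)).

(* An epitopological space X is initial for some maps f_j : X -> Z_j^{Y_j}
   with Y_j, Z_j topological.  For topological T the pseudotopological
   exponential X^T is then initial for phi |-> ((y, t) |-> f_j (phi t) y) into
   Z_j^{Y_j * T}, so it is epitopological; as it has the universal property of
   the exponential in all of PsTop, it is the exponential object of EpiTop.
   Likewise the pseudotopology induced on a subset of an epitopological space
   is epitopological, hence is the subobject structure of EpiTop; this gives
   Omega^ps = Omega^epi.  For topological X, ultrafilter convergence in the
   pseudotopological X^[0,1] is compact-open convergence, since in the compact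
   Hausdorff space [0,1] every neighbourhood contains a compact one. *)

From HB Require Import structures.
From mathcomp Require Import all_boot all_order all_algebra.
From mathcomp Require Import all_classical all_reals all_analysis.
From mathcomp Require Import Rstruct Rstruct_topology.
Local Open Scope classical_set_scope.

#[local] Arguments ev {A B}.

(** * Ultrafilters and product filters *)

Lemma ultra_fmap {T U : Type} (f : T -> U) {F : set_system T} :
  UltraFilter F -> UltraFilter (f @ F).
Proof.
move=> uF; split=> [|G pG FG]; first exact: fmap_proper_filter.
rewrite eqEsubset; split=> // A GA.
have [//|FnA] := in_ultra_setVsetC (f @^-1` A) uF.
by have /filter_ex [x []] : G (A `&` ~` A) by apply: filterI => //; exact: FG.
Qed.

Lemma filter_ultra_refinements {T : Type} (F : set_system T) {FF : Filter F} (A : set T) :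
  (forall V, UltraFilter V -> F `<=` V -> V A) -> F A.
Proof.
move=> FA; apply: contrapT => nFA.
have : ProperFilter (within (~` A) F).
  apply: Build_ProperFilter; rewrite /within /= => F0; apply: nFA.
  by apply: filterS F0 => x /= nA; apply: contrapT.
case/ultraFilterLemma => V [uV FAV].
have FV : F `<=` V by move=> P FP; apply: FAV; apply: filterS FP => x Px _.
have VnA : V (~` A) by apply: FAV; rewrite /within /=; apply: filterS filterT => x _.
by have /filter_ex [x []] : V (A `&` ~` A) by exact: filterI (FA V uV FV) VnA.
Qed.

Lemma ultra_lift {S T : Type} (k : S -> T) (H : set_system S) {FH : Filter H}
    (W : set_system T) : UltraFilter W -> k @ H `<=` W ->
  exists W' : set_system S, [/\ UltraFilter W', H `<=` W' & k @ W' = W].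
Proof.
move=> uW kHW.
pose H' := [set P | exists2 C, H C & exists2 B, W B & C `&` k @^-1` B `<=` P].
have FH' : Filter H'.
  rewrite /H'; split => /=.
  - by exists setT; [exact: filterT|exists setT; [exact: filterT|]].
  - move=> P Q [C1 HC1 [B1 WB1 s1]] [C2 HC2 [B2 WB2 s2]].
    exists (C1 `&` C2); first exact: filterI.
    exists (B1 `&` B2); first exact: filterI.
    by move=> x [[? ?] [? ?]]; split; [apply: s1|apply: s2].
  - by move=> P Q PQ [C HC [B WB s]]; exists C => //; exists B => //; apply: subset_trans PQ.
have : ProperFilter H'.
  apply: Build_ProperFilter; rewrite /H' => -[C HC [B WB s]].
  have /kHW WnB : H (k @^-1` (~` B)).
    by apply: filterS HC => x Cx Bkx; exact: (s x).
  by have /filter_ex [? []] : W (B `&` ~` B) by exact: filterI.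
case/ultraFilterLemma => W' [uW' H'W']; exists W'; split => //.
  by move=> C HC; apply: H'W'; exists C => //; exists setT => [|x []//]; exact: filterT.
apply: max_filter => B WB.
by apply: H'W'; exists setT; [exact: filterT|exists B => // x []].
Qed.

Lemma fmap_ev_prod {A B C : Type} (k : A -> B -> C) (F : set_system A) {FF : Filter F}
    (G : set_system B) :
  ev @ filter_prod (k @ F) G = (fun p => k p.1 p.2) @ filter_prod F G.
Proof.
rewrite eqEsubset; split=> P [[P1 P2] /= [FP1 GP2] sP].
  by exists (k @^-1` P1, P2) => // -[a b] [Pa Qb]; exact: (sP (k a, b) (conj Pa Qb)).
exists (k @` P1, P2) => /=; first by split => //; apply: filterS FP1 => a; exists a.
by move=> [f b] /= [[a ? <-] ?]; exact: (sP (a, b)).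
Qed.

Lemma ev_prod_fmap_sub {S A B : Type} (h1 : S -> A -> B) (h2 : S -> A)
    (W : set_system S) {FW : Filter W} :
  ev @ filter_prod (h1 @ W) (h2 @ W) `<=` (fun w => h1 w (h2 w)) @ W.
Proof.
move=> P [[P1 P2] /= [WP1 WP2] sP].
by apply: filterS (filterI WP1 WP2) => w [? ?]; exact: (sP (h1 w, h2 w)).
Qed.

Lemma cvg_filter_prod {A B : Type} {F F' : set_system A} {G G' : set_system B} :
  F --> F' -> G --> G' -> filter_prod F G --> filter_prod F' G'.
Proof.
move=> FF' GG' P [[P1 P2] /= [F'P1 G'P2] sP].
by exists (P1, P2) => //; split; [exact: FF' | exact: GG'].
Qed.

Lemma filter_prod_fst_sub {A B : Type} {F : set_system A} {G : set_system B}
    {W : set_system (A * B)} {FG : Filter G} : filter_prod F G `<=` W -> F `<=` fst @ W.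
Proof. by move=> FGW; apply: cvg_trans (cvg_app fst FGW) cvg_fst. Qed.

Lemma filter_prod_snd_sub {A B : Type} {F : set_system A} {G : set_system B}
    {W : set_system (A * B)} {FF : Filter F} : filter_prod F G `<=` W -> G `<=` snd @ W.
Proof. by move=> FGW; apply: cvg_trans (cvg_app snd FGW) cvg_snd. Qed.

Lemma filter_prod_proj_sub {A B : Type} {W : set_system (A * B)} {FW : Filter W} :
  filter_prod (fst @ W) (snd @ W) `<=` W.
Proof.
move=> P [[P1 P2] /= [WP1 WP2] sP].
by apply: filterS (filterI WP1 WP2) => -[a b] [? ?]; exact: sP.
Qed.

Lemma cvg_prod_fst {A B : topologicalType} {W : set_system (A * B)} {p : A * B} :
  W --> p -> fst @ W --> p.1.
Proof. by move=> Wp; exact: cvg_trans (cvg_app fst Wp) cvg_fst. Qed.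

Lemma cvg_prod_snd {A B : topologicalType} {W : set_system (A * B)} {p : A * B} :
  W --> p -> snd @ W --> p.2.
Proof. by move=> Wp; exact: cvg_trans (cvg_app snd Wp) cvg_snd. Qed.

Lemma ev_curry_sub {A B C : Type} (U : set_system (B -> A -> C)) (G : set_system B)
    (H : set_system A) :
  ev @ filter_prod ((fun psi p => psi p.2 p.1) @ U) (filter_prod H G)
  `<=` ev @ filter_prod (ev @ filter_prod U G) H.
Proof.
move=> P [[P1 P2] /= [UP1 [[Q1 Q2] /= [HQ1 GQ2] sQ]] sP].
exists ([set f | forall a, Q1 a -> P (f a)], Q1) => /=; last by move=> [f a] /= [fP Qa]; exact: fP.
split=> //; exists ((fun psi p => psi p.2 p.1) @^-1` P1, Q2) => // -[psi b] /= [Ppsi Qb] a Qa.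
exact: (sP (_, (a, b)) (conj Ppsi (sQ (a, b) (conj Qa Qb)))).
Qed.

Lemma fmap_principal_filter {S T : Type} (f : S -> T) (x : S) :
  f @ principal_filter x = principal_filter (f x).
Proof. by rewrite eqEsubset; split=> P Px y ->; exact: Px. Qed.

Lemma fmap_cst_principal {S T : Type} (F : set_system S) (z : T) :
  ProperFilter F -> (fun=> z) @ F = principal_filter z.
Proof.
move=> PF; rewrite eqEsubset; split=> P.
  by move=> /(@filter_ex _ F) [x Pz] y ->.
by move=> Pz; apply: (@filterS _ F) filterT => x _; exact: Pz.
Qed.

Lemma fmap_fst_prod_ultra {A B : Type} (U : set_system A) (G : set_system B) :
  UltraFilter U -> ProperFilter G -> fst @ filter_prod U G = U.
Proof. by move=> uU PG; apply: max_filter; exact: cvg_fst. Qed.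

(** * Pseudotopological spaces *)

Lemma ultra_on_principal {X : pspace} {x : pt X} :
  car X x -> ultra_on X (principal_filter x).
Proof. by move=> Xx; split; [exact: principal_filter_ultra | move=> y ->]. Qed.

Lemma ultra_on_fmap {X Y : pspace} {f : pt X -> pt Y} {U : set_system (pt X)} :
  ultra_on X U -> (forall x, car X x -> car Y (f x)) -> ultra_on Y (f @ U).
Proof. by move=> [uU UX] fXY; split; [exact: ultra_fmap | exact: filterS fXY UX]. Qed.

Lemma ultra_on_top {T : topologicalType} {U : set_system T} :
  UltraFilter U -> ultra_on (top_ps T) U.
Proof. by move=> uU; split=> //; exact: filterT. Qed.

Lemma cv_fcv {X : pspace} {U : set_system (pt X)} {x : pt X} :
  ultra_on X U -> cv X U x -> fcv X U x.
Proof. by move=> [uU _] Ux V [uV _] /max_filter ->. Qed.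

Lemma fcv_topP (T : topologicalType) (G : set_system T) {FG : Filter G} (x : T) :
  fcv (top_ps T) G x <-> G --> x.
Proof.
split=> [Gx A xA | Gx V _ GV]; last exact: cvg_trans GV Gx.
by apply: filter_ultra_refinements => V uV GV; exact: Gx V (conj uV filterT) GV A xA.
Qed.

Lemma ps_cont_topP (T U : topologicalType) (k : T -> U) :
  ps_cont (top_ps T) (top_ps U) k <-> continuous k.
Proof.
split=> [[_ kc] t A kA | kc]; last first.
  by split=> // V t _ _ Vt; exact: cvg_trans (cvg_app k Vt) (kc t).
suff : nbhs t (k @^-1` A) by [].
by apply: filter_ultra_refinements => V uV tV; exact: kc V t (conj uV filterT) I tV A kA.
Qed.

Lemma exp_top_cvP (Y Z : topologicalType) (F : set_system (Y -> Z)) {FF : Filter F}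
    (k : Y -> Z) :
  cv (ps_exp (top_ps Y) (top_ps Z)) F k <->
  forall (G : set_system Y) (y : Y), ProperFilter G -> G --> y -> ev @ filter_prod F G --> k y.
Proof.
split=> [Fk G y PG Gy | Fk G y PG _ _ /fcv_topP Gy]; apply/fcv_topP; last exact: Fk.
by apply: Fk => //; [exact: filterT | exact/fcv_topP].
Qed.

Lemma exp_top_principal (Y Z : topologicalType) (k : Y -> Z) :
  continuous k -> cv (ps_exp (top_ps Y) (top_ps Z)) (principal_filter k) k.
Proof.
move=> kc; apply/exp_top_cvP => G y PG Gy A kyA.
by exists ([set k], k @^-1` A) => [|[g z] /= [-> //]]; split=> //=; exact: Gy _ (kc y _ kyA).
Qed.

Lemma epitop_pseudotop (X : pspace) : epitop X -> is_pseudotop X.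
Proof.
move=> [J [Y [Z [f [fX Xcv]]]]] x Xx.
apply/(Xcv _ _ (ultra_on_principal Xx) Xx) => j; rewrite fmap_principal_filter.
by apply: exp_top_principal; apply/ps_cont_topP; exact: fX.
Qed.

Lemma top_epitop (T : topologicalType) : epitop (top_ps T).
Proof.
exists unit, (fun=> T), (fun=> T), (fun=> fun x (_ : T) => x); split.
  by move=> _ x _; apply/ps_cont_topP; exact: cst_continuous.
move=> U x [uU _] _.
have evU G : ProperFilter G -> ev @ filter_prod ((fun x (_ : T) => x) @ U) G = U.
  by move=> PG; rewrite fmap_ev_prod; exact: fmap_fst_prod_ultra.
split=> [Ux [] | /(_ tt) /exp_top_cvP Ux].
  by apply/exp_top_cvP => G y PG _; rewrite evU.
by rewrite -(evU _ (nbhs_pfilter x)); exact: (Ux _ x (nbhs_pfilter x) cvg_refl).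
Qed.

Lemma ps_cont_ev (A X : pspace) : ps_cont (ps_prod (ps_exp A X) A) X ev.
Proof.
split=> [[phi a] [[phiX _] Aa] | U [phi a] uU [_ Aa] [Uphi Ua]]; first exact: phiX.
have uUa : ultra_on A (snd @ U) by apply: (ultra_on_fmap uU) => -[? ?] [].
have uUev : ultra_on X (ev @ U).
  by apply: (ultra_on_fmap uU) => -[psi b] [[psiX _] Ab]; exact: psiX.
have [uU' _] := uU.
exact: Uphi _ a _ (proj2 uUa) Aa (cv_fcv uUa Ua) _ uUev (cvg_app ev filter_prod_proj_sub).
Qed.

Lemma ps_cont_curry (A X Z : pspace) (g : pt Z * pt A -> pt X) :
  is_pseudotop Z -> ps_cont (ps_prod Z A) X g ->
  ps_cont Z (ps_exp A X) (fun z a => g (z, a)).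
Proof.
move=> Zps [gX gcv]; split=> [z Zz | U z uU Zz Uz].
  split=> [a Aa | U a uU Aa Ua]; first exact: gX.
  have [uU' _] := uU.
  apply: (gcv _ (z, a) (ultra_on_fmap uU _) (conj Zz Aa)) => //; split => //=.
  have -> : fst @ ((fun a => (z, a)) @ U) = principal_filter z by exact: fmap_cst_principal.
  exact: Zps.
move=> G a PG GA Aa Ga V uV; have [uU' UZ] := uU.
have gE : (fun p : pt Z * pt A => g (p.1, p.2)) = g by apply: funext => -[].
rewrite fmap_ev_prod gE.
move=> /(ultra_lift _ _ _ (proj1 uV)) [W [uW UGW <-]].
have uWp : ultra_on (ps_prod Z A) W by split=> //; apply: UGW; exists (car Z, car A).
apply: (gcv _ (z, a) uWp (conj Zz Aa)); split=> /=.
  by rewrite (max_filter _ (filter_prod_fst_sub UGW)).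
exact: Ga _ (ultra_on_fmap uWp (fun _ => @proj2 _ _)) (filter_prod_snd_sub UGW).
Qed.

Lemma initial_cont {X : pspace} {J : Type} {W : J -> pspace}
    {f : forall j, pt X -> pt (W j)} :
  is_initial X J W f -> forall j, ps_cont X (W j) (f j).
Proof. by move=> [fW Xcv] j; split=> [|U x uU Xx /(Xcv _ _ uU Xx)]; [exact: fW | apply]. Qed.

Lemma ps_cont_comp {X Y Z : pspace} {f : pt X -> pt Y} {g : pt Y -> pt Z} :
  ps_cont X Y f -> ps_cont Y Z g -> ps_cont X Z (g \o f).
Proof.
move=> [fY fcv] [gZ gcv]; split=> [x /fY /gZ // | U x uU Xx Ux].
exact: gcv _ _ (ultra_on_fmap uU fY) (fY _ Xx) (fcv _ _ uU Xx Ux).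
Qed.

Lemma ev_prod_car (A X : pspace) (U : set_system (pt A -> pt X)) (G : set_system (pt A)) :
  U (ps_cont A X) -> G (car A) -> (ev @ filter_prod U G) (car X).
Proof. by move=> UAX GA; exists (ps_cont A X, car A) => // -[psi b] [[psiX _] Ab]; exact: psiX. Qed.

Lemma exp_initial (A : pspace) {X : pspace} {J : Type} {W : J -> pspace}
    {f : forall j, pt X -> pt (W j)} :
  is_initial X J W f ->
  is_initial (ps_exp A X) J (fun j => ps_exp A (W j)) (fun j phi => f j \o phi).
Proof.
move=> Xinit; have [fW Xcv] := Xinit.
split=> [j phi phiX | U phi uU phiX]; first exact: ps_cont_comp phiX (initial_cont Xinit j).
have [[uU' UAX] [phiX' _]] := (uU, phiX).
split=> [Uphi j G a PG GA Aa Ga V uV | Uf G a PG GA Aa Ga V uV GV].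
  rewrite fmap_ev_prod => /(ultra_lift (f j) (ev @ filter_prod U G) _ (proj1 uV)).
  case=> V' [uV' GV' <-]; have uV'X : ultra_on X V' by split=> //; exact/GV'/ev_prod_car.
  exact: (Xcv _ _ uV'X (phiX' _ Aa)).1 (Uphi G a PG GA Aa Ga V' uV'X GV') j.
apply/(Xcv _ _ uV (phiX' _ Aa)) => j.
have fGV : ev @ filter_prod ((fun phi => f j \o phi) @ U) G `<=` f j @ V.
  by rewrite fmap_ev_prod; exact: (cvg_app (f j) GV).
exact: Uf j G a PG GA Aa Ga _ (ultra_on_fmap uV (fW j)) fGV.
Qed.

Lemma initial_comp {X : pspace} {J : Type} {W V : J -> pspace}
    {f : forall j, pt X -> pt (W j)} {g : forall j, pt (W j) -> pt (V j)} :
  is_initial X J W f -> (forall j, is_initial (W j) unit (fun=> V j) (fun=> g j)) ->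
  is_initial X J V (fun j => g j \o f j).
Proof.
move=> [fW Xcv] Winit; split=> [j x /(fW j) /(proj1 (Winit j) tt) // | U x uU Xx].
rewrite Xcv //; split=> Uf j; have Wcv := proj2 (Winit j) _ _ (ultra_on_fmap uU (fW j)) (fW j _ Xx).
  exact: (Wcv.1 (Uf j) tt).
by apply/Wcv => -[]; exact: Uf.
Qed.

(** * Exponentials in EpiTop *)

Section exp_uncurry.
Variables Y T Z : topologicalType.

Local Notation ZYT := (ps_exp (top_ps T) (ps_exp (top_ps Y) (top_ps Z))).
Local Notation ZYxT := (ps_exp (top_ps (Y * T)%type) (top_ps Z)).
Local Notation uncurry := (fun (psi : T -> Y -> Z) (p : Y * T) => psi p.2 p.1).

Lemma uncurry_continuous (psi : T -> Y -> Z) : car ZYT psi -> continuous (uncurry psi).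
Proof.
move=> [_ psicv]; apply/ps_cont_topP; split=> // W [y t] [uW _] _ Wyt.
have /exp_top_cvP psiW := psicv _ t (ultra_on_top (ultra_fmap snd uW)) I (cvg_prod_snd Wyt).
exact: cvg_trans (ev_prod_fmap_sub (fun p => psi p.2) fst W) (psiW _ y _ (cvg_prod_fst Wyt)).
Qed.

Lemma cv_uncurry (U : set_system (T -> Y -> Z)) (psi : T -> Y -> Z) :
  ultra_on ZYT U -> cv ZYT U psi -> cv ZYxT (uncurry @ U) (uncurry psi).
Proof.
move=> [uU UZYT] Upsi; have FU : Filter U by exact: ultra_proper.
apply/exp_top_cvP => G p PG Gp; apply/fcv_topP => V [uV _].
rewrite fmap_ev_prod => /(ultra_lift _ _ _ uV) [W [uW UGW <-]].
pose V1 := (fun w : (T -> Y -> Z) * (Y * T) => w.1 w.2.2) @ W.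
have Wp : snd @ W --> p := cvg_trans (filter_prod_snd_sub (FF := FU) UGW) Gp.
have uV1 : ultra_on (ps_exp (top_ps Y) (top_ps Z)) V1.
  split; first exact: ultra_fmap.
  apply: UGW; exists (car ZYT, setT) => [|[phi q] [[phiYZ _] _]]; last exact: phiYZ.
  by split=> //; exact: filterT.
have /exp_top_cvP V1psi : cv (ps_exp (top_ps Y) (top_ps Z)) V1 (psi p.2).
  have tW : fcv (top_ps T) (snd @ (snd @ W)) p.2 by apply/fcv_topP; exact: cvg_prod_snd Wp.
  apply: (Upsi _ p.2 _ filterT I tW _ uV1).
  rewrite -[X in ev @ filter_prod X _](max_filter _ (filter_prod_fst_sub UGW)).
  exact: ev_prod_fmap_sub.
exact: cvg_trans (ev_prod_fmap_sub (fun w => w.1 w.2.2) (fun w => w.2.1) W)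
  (V1psi _ p.1 _ (cvg_prod_fst Wp)).
Qed.

Lemma cv_curry (U : set_system (T -> Y -> Z)) (psi : T -> Y -> Z) :
  ultra_on ZYT U -> cv ZYxT (uncurry @ U) (uncurry psi) -> cv ZYT U psi.
Proof.
move=> [uU _]; have FU : Filter U by exact: ultra_proper.
move=> /exp_top_cvP Uunc G t PG _ _ /fcv_topP Gt V [uV _] UGV.
have FV : Filter V by exact: ultra_proper.
apply/exp_top_cvP => H y PH Hy; apply: cvg_trans (Uunc _ (y, t) _ (cvg_filter_prod Hy Gt)).
exact: cvg_trans (cvg_app ev (cvg_filter_prod UGV cvg_refl)) (ev_curry_sub U G H).
Qed.

Lemma uncurry_initial : is_initial ZYT unit (fun=> ZYxT) (fun=> uncurry).
Proof.
split=> [_ psi /uncurry_continuous /ps_cont_topP // | U psi uU _].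
by split=> [Upsi [] | /(_ tt)]; [exact: cv_uncurry | exact: cv_curry].
Qed.

End exp_uncurry.

(* X^T is initial for phi |-> f_j \o phi into (Z_j^{Y_j})^T, and that space is
   initial for uncurrying into Z_j^{Y_j * T}. *)
Lemma exp_epitop (T : topologicalType) (X : pspace) :
  epitop X -> epitop (ps_exp (top_ps T) X).
Proof.
move=> [J [Y [Z [f Xinit]]]]; exists J, (fun j => (Y j * T)%type : topologicalType), Z.
exists (fun j phi p => f j (phi p.2) p.1).
exact: initial_comp (exp_initial (top_ps T) Xinit) (fun j => uncurry_initial (Y j) T (Z j)).
Qed.

Lemma epi_exp_ps_exp (T : topologicalType) (X : pspace) :
  epitop X -> is_epi_exp (top_ps T) X (cv (ps_exp (top_ps T) X)).
Proof.
move=> Xepi; split; first exact: exp_epitop.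
split=> [|Z Zepi g gc]; first exact: ps_cont_ev.
by apply: ps_cont_curry gc; exact: epitop_pseudotop.
Qed.

Lemma same_cv_sym {T : Type} {S : set T} {c1 c2 : set_system T -> T -> Prop} :
  same_cv _ S c1 c2 -> same_cv _ S c2 c1.
Proof. by move=> c12 U x uU US Sx; apply: iff_sym; exact: c12. Qed.

Lemma same_cv_trans {T : Type} {S : set T} {c1 c2 c3 : set_system T -> T -> Prop} :
  same_cv _ S c1 c2 -> same_cv _ S c2 c3 -> same_cv _ S c1 c3.
Proof. by move=> c12 c23 U x uU US Sx; exact: iff_trans (c12 _ _ uU US Sx) (c23 _ _ uU US Sx). Qed.

Lemma same_cv_sub {T : Type} {S S' : set T} {c1 c2 : set_system T -> T -> Prop} :
  S' `<=` S -> same_cv _ S c1 c2 -> same_cv _ S' c1 c2.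
Proof. by move=> S'S c12 U x uU US' S'x; apply: c12 (S'S x S'x) => //; exact: filterS US'. Qed.

Lemma epi_exp_unique (A X : pspace) (e1 e2 : set_system (pt A -> pt X) -> (pt A -> pt X) -> Prop) :
  is_epi_exp A X e1 -> is_epi_exp A X e2 -> same_cv _ (ps_cont A X) e1 e2.
Proof.
move=> [epi1 [ev1 univ1]] [epi2 [ev2 univ2]] U x uU US Sx; split.
  exact: (univ2 _ epi1 _ ev1).2 U x (conj uU US) Sx.
exact: (univ1 _ epi2 _ ev2).2 U x (conj uU US) Sx.
Qed.

Lemma epitop_same_cv {T : Type} {S : set T} {c1 c2 : set_system T -> T -> Prop} :
  same_cv _ S c1 c2 -> epitop (@PSpace T S c1) -> epitop (@PSpace T S c2).
Proof.
move=> c12 [J [Y [Z [f [fZ fcv]]]]]; exists J, Y, Z, f; split=> // U x [uU US] Sx.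
exact: iff_trans (iff_sym (c12 _ _ uU US Sx)) (fcv _ _ (conj uU US) Sx).
Qed.

Lemma epitop_sub {E : pspace} {S : set (pt E)} :
  epitop E -> S `<=` car E -> epitop (@PSpace (pt E) S (cv E)).
Proof.
move=> [J [Y [Z [f [fZ fcv]]]]] SE; exists J, Y, Z, f; split=> [j x /SE | U x [uU US] Sx].
  exact: fZ.
by apply: fcv (SE x Sx); split=> //; exact: filterS US.
Qed.

Lemma epi_subP (E : pspace) (S : set (pt E)) (s : set_system (pt E) -> pt E -> Prop) :
  epitop E -> S `<=` car E -> is_epi_sub E S s <-> same_cv _ S s (cv E).
Proof.
move=> Eepi SE; have Sepi := epitop_sub Eepi SE; split.
  move=> [_ [_ [[_ idcv] univ]]] U x uU US Sx; split; first exact: idcv (conj uU US) Sx.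
  have [_ idcv'] := univ _ Sepi id (fun=> id) (conj SE (fun _ _ _ _ => id)).
  exact: idcv' (conj uU US) Sx.
move=> sE; split=> //; split; first exact: epitop_same_cv (same_cv_sym sE) Sepi.
split=> [|Z _ g gS [gE gcv]].
  by split=> // U x [uU US] Sx /(sE _ _ uU US Sx).
split=> // U z uZ Zz Uz; have [uU UZ] := uZ.
by apply/(sE _ _ (ultra_fmap g uU) (filterS gS UZ) (gS z Zz)); exact: gcv.
Qed.

Lemma Omega_ps_epi (X : pspace) (x0 : pt X)
    (e : set_system (I01 -> pt X) -> (I01 -> pt X) -> Prop)
    (s : set_system (I01 -> pt X) -> (I01 -> pt X) -> Prop) :
  epitop X -> is_epi_exp Ips X e ->
  is_epi_sub (epi_exp_I X e) (ps_loops X x0) s <->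
  same_cv _ (ps_loops X x0) s (cv (Omega_ps X x0)).
Proof.
move=> Xepi eX; have [eepi _] := eX.
have loopsC : ps_loops X x0 `<=` ps_cont Ips X by move=> l [].
have e_ps := same_cv_sub loopsC (epi_exp_unique _ _ _ _ eX (epi_exp_ps_exp I01 X Xepi)).
apply: iff_trans (epi_subP _ _ _ eepi loopsC) _.
by split=> se; [exact: same_cv_trans se e_ps | exact: same_cv_trans se (same_cv_sym e_ps)].
Qed.

(** * The compact-open topology *)

Lemma I01_compact : compact [set: I01].
Proof.
rewrite compact_ultra /= => F uF _.
have F01 : (set_val @ F) `[0%R, 1%R].
  by apply: (@filterS _ F) filterT => -[x x01] _; exact: set_mem x01.
have := @segment_compact Rdefinitions.R 0%R 1%R; rewrite compact_ultra.
move=> /(_ _ (ultra_fmap set_val uF) F01) [p [p01 Fp]].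
exists (exist _ p (mem_set p01)); split=> // A [B [[W oW <-] /= Wp BA]].
by apply: filterS BA _; apply: Fp; exact: open_nbhs_nbhs.
Qed.

Lemma compact_nbhs_base {T : uniformType} {t : T} {W : set T} :
  compact [set: T] -> nbhs t W -> exists K, [/\ compact K, nbhs t K & K `<=` W].
Proof.
move=> cT /uniform_regular [R tR RW]; exists (closure R); split=> //.
- by rewrite -[closure R]setTI; apply: compact_closedI cT _; exact: closed_closure.
- by apply: filterS tR; exact: subset_closure.
Qed.

(* If U avoided the subbasic set {g | g @` K `<=` O}, then pushing U along a
   choice tau g of a point of K with g (tau g) outside O gives an ultrafilter on
   K, converging to some t by compactness; convergence of U then puts
   g (tau g) in the neighbourhood O of l t for U-almost all g. *)
Lemma compact_open_cvg_exp (T X : topologicalType) (U : set_system (T -> X)) (l : T -> X) :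
  UltraFilter U -> cv (ps_exp (top_ps T) (top_ps X)) U l ->
  (U : set_system (@compact_open T X)) --> (l : @compact_open T X).
Proof.
move=> uU /exp_top_cvP Ul; apply/compact_open_cvgP => K O cK oO lKO.
have [//|UnKO] := in_ultra_setVsetC [set g : T -> X | g @` K `<=` O] uU; exfalso.
have escape g : ~ (g @` K `<=` O) -> exists s, K s /\ ~ O (g s).
  move=> gKO; apply: contrapT => noesc; apply: gKO => _ [s Ks <-].
  by apply: contrapT => nO; apply: noesc; exists s.
have [g0 /escape [s0 _]] := filter_ex UnKO.
pose tau g := xget s0 [set s | K s /\ ~ O (g s)].
have tauP g : ~ (g @` K `<=` O) -> K (tau g) /\ ~ O (g (tau g)).
  by move=> /escape; exact: xgetPex.
have Ktau : (tau @ U) K by apply: (@filterS _ U) UnKO => g /tauP [].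
move: cK; rewrite compact_ultra => /(_ (tau @ U) (ultra_fmap tau uU) Ktau) [t [Kt Ut]].
have Ol : nbhs (l t) O by apply: open_nbhs_nbhs; split=> //; apply: lKO; exists t.
have UO : U [set g | O (g (tau g))].
  by apply: (ev_prod_fmap_sub id tau U); exact: Ul _ t _ Ut O Ol.
by case: (filter_ex (filterI UO UnKO)) => g [Og /tauP [_]].
Qed.

Lemma exp_cvg_compact_open (T : uniformType) (X : topologicalType)
    (U : set_system (T -> X)) (l : T -> X) :
  compact [set: T] -> Filter U -> continuous l ->
  (U : set_system (@compact_open T X)) --> (l : @compact_open T X) ->
  cv (ps_exp (top_ps T) (top_ps X)) U l.
Proof.
move=> cT FU lc /(compact_open_cvgP _ FU) Ul.
apply/exp_top_cvP => G t PG Gt N; rewrite nbhsE /=; move=> -[B [oB Blt] BN].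
have /(compact_nbhs_base cT) [K [cK Kt KO]] : nbhs t (l @^-1` B).
  by apply: lc; exact: open_nbhs_nbhs.
exists ([set g : T -> X | g @` K `<=` B], K) => [|[g s] /= [gKO Ks]].
  by split; [apply: Ul => // _ [s Ks <-]; exact: KO | exact: Gt].
by apply: BN; apply: gKO; exists s.
Qed.

Lemma ps_loops_top (X : topologicalType) (x0 : X) :
  ps_loops (top_ps X) x0 = top_loops X x0.
Proof. by apply/seteqP; split=> l [/ps_cont_topP lc l01]. Qed.

Lemma Omega_ps_top (X : topologicalType) (x0 : X) :
  same_cv _ (top_loops X x0) (cv (Omega_ps (top_ps X) x0)) (cv (Omega_top X x0)).
Proof.
move=> U l uU _ [lc _]; split; first exact: compact_open_cvg_exp.
exact: exp_cvg_compact_open I01_compact _ lc.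
Qed.

Theorem proposition5p8 :
  (* (1) X epitopological: Omega^ps(X,x0) = Omega^epi(X,x0) *)
  (forall (X : pspace) (x0 : pt X),
     is_pseudotop X -> epitop X -> car X x0 ->
     (exists e, is_epi_exp Ips X e) /\
     (forall e, is_epi_exp Ips X e ->
        forall s, is_epi_sub (epi_exp_I X e) (ps_loops X x0) s <->
                  same_cv _ (ps_loops X x0) s (cv (Omega_ps X x0)))) /\
  (* (2) X' topological: Omega^epi(X',x0') = Omega^top(X',x0') *)
  (forall (X' : topologicalType) (x0' : X'),
     (exists e, is_epi_exp Ips (top_ps X') e) /\
     (forall e, is_epi_exp Ips (top_ps X') e ->
        ps_loops (top_ps X') x0' = car (Omega_top X' x0') /\
        forall s, is_epi_sub (epi_exp_I (top_ps X') e) (ps_loops (top_ps X') x0') s <->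
                  same_cv _ (car (Omega_top X' x0')) s (cv (Omega_top X' x0')))).
Proof.
split=> [X x0 _ Xepi _ | X x0].
  split=> [|e eX s]; last exact: Omega_ps_epi.
  by exists (cv (ps_exp Ips X)); exact: epi_exp_ps_exp.
have Xepi := top_epitop X.
split=> [|e eX]; first by exists (cv (ps_exp Ips (top_ps X))); exact: epi_exp_ps_exp.
split=> [|s]; first exact: ps_loops_top.
rewrite (Omega_ps_epi _ _ _ _ Xepi eX) ps_loops_top /=.
have ps_top := Omega_ps_top X x0.
by split=> se; [exact: same_cv_trans se ps_top | exact: same_cv_trans se (same_cv_sym ps_top)].
Qed.
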